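(* Let $p,\mu\in(1,\infty)$, let $\eta:[0,\infty)\to[0,1]$ be continuous, and set $$\omega(t):=\eta(t)(1+t)^{-\mu}+(1-\eta(t))(1+t)^{p-2},\quad t\ge0,\qquad G(\xi):=\int_0^{|\xi|}\int_0^s\omega(r)\,\mathrm{d}r\,\mathrm{d}s,\quad\xi\in\mathbb{R}^2.$$ Then there are constants $c_5,c_6>0$ such that $$c_5(1+|\xi|)^{-\mu}|\zeta|^2\le D^2G(\xi)(\zeta,\zeta)\le c_6(1+|\xi|)^{p-2}|\zeta|^2\quad\text{for all }\xi,\zeta\in\mathbb{R}^2.$$ *)

From HB Require Import structures.
From mathcomp Require Import all_boot all_order all_algebra.
From mathcomp Require Import all_classical all_reals all_analysis.
Set Implicit Arguments. Unset Strict Implicit. Unset Printing Implicit Defensive.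
Import Order.TTheory GRing.Theory Num.Theory.
Import numFieldNormedType.Exports.
Local Open Scope classical_set_scope.
Local Open Scope ring_scope.

Definition omega (R : realType) (p mu : R) (eta : R -> R) (t : R) : R :=
  eta t * (1 + t) `^ (- mu) + (1 - eta t) * (1 + t) `^ (p - 2).

(* Euclidean norm on R^2 (MathComp's matrix norm is the sup norm). *)
Definition enorm (R : realType) (x : 'rV[R]_2) : R :=
  Num.sqrt (\sum_(i < 2) x ord0 i ^+ 2).

Definition Gfun (R : realType) (p mu : R) (eta : R -> R) (x : 'rV[R]_2) : R :=
  Rintegral lebesgue_measure `[0, enorm x]
    (fun s => Rintegral lebesgue_measure `[0, s] (omega p mu eta)).

From HB Require Import structures.
From mathcomp Require Import all_boot all_order all_algebra.
From mathcomp Require Import all_classical all_reals all_analysis.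
From mathcomp Require Import ring lra.
Import Order.TTheory GRing.Theory Num.Theory.
Import numFieldNormedType.Exports.
Local Open Scope classical_set_scope.
Local Open Scope ring_scope.

(* Write t = |xi|, h(s) = int_0^s omega and G = g o |.| with g' = h.  For xi <> 0,
     D^2 G(xi)(zeta, zeta) = omega(t) b + (h(t) / t) (|zeta|^2 - b),  b = (xi . zeta / t)^2,
   and 0 <= b <= |zeta|^2 by Cauchy-Schwarz, so it suffices to bound omega(t) and h(t) / t
   between (1 + t)^(-mu) and C (1 + t)^(p-2) with C = 1 + 1/(p-1).  For omega this follows
   from 0 <= eta <= 1 and -mu <= p - 2; for h(t) / t by integrating these bounds, comparing
   h with the antiderivative (1 + s)^(p-1) / (p-1) of (1 + s)^(p-2) when p < 2.  At xi = 0,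
   h(s) / s -> omega(0) = 1 gives D^2 G(0)(zeta, zeta) = |zeta|^2. *)

Lemma weighted_mean_bounds (R : realDomainType) (lo hi x y a b : R) :
  lo <= x <= hi -> lo <= y <= hi -> 0 <= b <= a ->
  lo * a <= x * b + y * (a - b) <= hi * a.
Proof.
move=> /andP[lox xhi] /andP[loy yhi] /andP[b0 ba]; rewrite -subr_ge0 in ba.
apply/andP; split; rewrite -subr_ge0.
- have -> : x * b + y * (a - b) - lo * a = (x - lo) * b + (y - lo) * (a - b) by ring.
  by rewrite addr_ge0 // mulr_ge0 // subr_ge0.
- have -> : hi * a - (x * b + y * (a - b)) = (hi - x) * b + (hi - y) * (a - b) by ring.
  by rewrite addr_ge0 // mulr_ge0 // subr_ge0.
Qed.

Section PowR.
Context {R : realType}.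

Lemma le0_ger_powR (r x y : R) : r <= 0 -> 0 < x -> x <= y -> y `^ r <= x `^ r.
Proof.
move=> r0 x0 xy; rewrite /powR !gt_eqF //; last exact: lt_le_trans xy.
by rewrite ler_expR ler_wnM2l // ler_ln // posrE (lt_le_trans x0).
Qed.

Lemma is_derive_powR1D (a x : R) : -1 < x ->
  is_derive x 1 (fun y : R => (1 + y) `^ a) (a * (1 + x) `^ (a - 1)).
Proof.
move=> x1; have : is_derive x 1 (fun y : R => 1 + y) 1.
  rewrite (_ : (fun y => 1 + y) = shift 1); first exact: is_derive_shift.
  by apply/funext => y; rewrite addrC.
have : is_derive (1 + x) 1 (fun y : R => y `^ a) (a * (1 + x) `^ (a - 1)).
  by apply: is_derive1_powR; rewrite -ltrBlDl sub0r.
by move=> /is_derive1_comp/[apply]; rewrite mulr1.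
Qed.

Lemma powR1D_continuous (a x : R) : -1 < x ->
  {for x, continuous (fun y : R => (1 + y) `^ a)}.
Proof.
move=> /(is_derive_powR1D a) [da _].
exact/differentiable_continuous/derivable1_diffP.
Qed.

Lemma powR1D_sub1_le (a s : R) : a <= 1 -> 0 <= s ->
  (1 + s) `^ a - 1 <= s * (1 + s) `^ (a - 1).
Proof.
move=> a1 s0; have s1 : 0 < 1 + s by rewrite ltr_pwDl.
have -> : (1 + s) `^ a = (1 + s) `^ (a - 1) * (1 + s).
  rewrite -{3}(powRr1 (ltW s1)) -powRD ?subrK //.
  by apply/implyP => _; rewrite gt_eqF.
have : (1 + s) `^ (a - 1) <= 1.
  by rewrite -[X in _ <= X](powRr0 (1 + s)); apply: ler_powR; [rewrite lerDl | rewrite subr_le0].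
by move: (powR_ge0 (1 + s) (a - 1)); nra.
Qed.

End PowR.

Section Primitive.
Context {R : realType}.
Notation mu := (@lebesgue_measure R).

Lemma lebesgue_itvcc_fine (a b : R) : a <= b -> fine (mu `[a, b]) = b - a.
Proof.
move=> ab; rewrite lebesgue_measure_itv /= lte_fin.
by case: ltP => //= ba; apply/esym/eqP; rewrite subr_eq0 eq_le ab ba.
Qed.

Lemma continuous_itvcc_integrable {f : R -> R} {a b : R} :
  {within `[a, b], continuous f} -> mu.-integrable `[a, b] (EFin \o f).
Proof. by move=> cf; apply: continuous_compact_integrable => //; exact: segment_compact. Qed.

Let cst_integrable (a b c : R) : mu.-integrable `[a, b] (EFin \o cst c).
Proof. by apply/continuous_itvcc_integrable/continuous_subspaceT => x; exact: cst_continuous. Qed.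

Lemma Rintegral_itvcc_ge (f : R -> R) (a b c : R) : a <= b ->
  {within `[a, b], continuous f} -> (forall r, a <= r <= b -> c <= f r) ->
  c * (b - a) <= Rintegral mu `[a, b] f.
Proof.
move=> ab cf fc; rewrite -lebesgue_itvcc_fine // -Rintegral_cst //.
apply: le_Rintegral; [by [] | exact: cst_integrable | exact: continuous_itvcc_integrable |].
by move=> r; rewrite /= in_itv /= => /fc.
Qed.

Lemma Rintegral_itvcc_le (f : R -> R) (a b c : R) : a <= b ->
  {within `[a, b], continuous f} -> (forall r, a <= r <= b -> f r <= c) ->
  Rintegral mu `[a, b] f <= c * (b - a).
Proof.
move=> ab cf fc; rewrite -lebesgue_itvcc_fine // -Rintegral_cst //.
apply: le_Rintegral; [by [] | exact: continuous_itvcc_integrable | exact: cst_integrable |].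
by move=> r; rewrite /= in_itv /= => /fc.
Qed.

Definition primitive0 (f : R -> R) (s : R) : R := Rintegral mu `[0, s] f.

Lemma primitive0_0 (f : R -> R) : primitive0 f 0 = 0.
Proof. by rewrite /primitive0 set_itv1 Rintegral_set1. Qed.

Section ContinuousIntegrand.
Context {f : R -> R}.
Hypothesis cf : {within `[0, +oo[, continuous f}.

Let cf_itvcc (b : R) : {within `[0, b], continuous f}.
Proof. by apply: continuous_subspaceW cf; apply: subset_itvl; rewrite bnd_simp. Qed.

Lemma primitive0_ge_cst (s c : R) : 0 <= s ->
  (forall r, 0 <= r <= s -> c <= f r) -> c * s <= primitive0 f s.
Proof. by move=> s0 fc; rewrite -[s in _ * s]subr0; apply: Rintegral_itvcc_ge. Qed.

Lemma primitive0_le_cst (s c : R) : 0 <= s ->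
  (forall r, 0 <= r <= s -> f r <= c) -> primitive0 f s <= c * s.
Proof. by move=> s0 fc; rewrite -[s in _ * s]subr0; apply: Rintegral_itvcc_le. Qed.

Lemma primitive0_within_itvcc {b : R} : 0 <= b ->
  {within `[0, b], continuous (primitive0 f)}.
Proof.
move=> b0; have := parameterized_integral_continuous b0 (continuous_itvcc_integrable (cf_itvcc b)).
exact.
Qed.

Lemma primitive0_derive {s : R} : 0 < s ->
  derivable (primitive0 f) s 1 /\ derive1 (primitive0 f) s = f s.
Proof.
move=> s0; apply: (@continuous_FTC1_closed R f 0 s (s + 1)) => //.
- by rewrite ltrDl.
- exact/continuous_itvcc_integrable/cf_itvcc.
- by have /continuous_within_itvcyP[+ _] := cf; apply; rewrite in_itv /= s0.
Qed.

Lemma primitive0_continuous : {within `[0, +oo[, continuous (primitive0 f)}.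
Proof.
apply/continuous_within_itvcyP; split.
- move=> s; rewrite in_itv /= andbT => s0.
  by apply/differentiable_continuous/derivable1_diffP; case: (primitive0_derive s0).
- by have /(continuous_within_itvP _ ltr01)[_ + _] := primitive0_within_itvcc ler01.
Qed.

Lemma primitive0_near0 {e : R} : 0 < e -> exists2 d : R, 0 < d &
  forall s, 0 <= s <= d -> `|primitive0 f s - s * f 0| <= e * s.
Proof.
move=> e0; have /continuous_within_itvcyP[_ /cvgrPdist_le /(_ e e0)] := cf.
rewrite near_withinE => /nbhs_ballP[d /= d0 fd].
exists (d / 2); first by rewrite divr_gt0.
move=> s /andP[s0 sd].
have f_near (r : R) : 0 <= r <= s -> f 0 - e <= f r <= f 0 + e.
  move=> /andP[r0 rs]; rewrite -ler_distlC.
  move: r0; rewrite le_eqVlt => /predU1P[<-|r0]; first by rewrite subrr normr0 ltW.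
  apply: fd => //; rewrite /ball /= sub0r normrN gtr0_norm //.
  by apply: le_lt_trans (le_trans rs sd) _; rewrite ltr_pdivrMr // ltr_pMr // ltr1n.
have lo : (f 0 - e) * s <= primitive0 f s.
  by apply: primitive0_ge_cst => // r /f_near/andP[].
have hi : primitive0 f s <= (f 0 + e) * s.
  by apply: primitive0_le_cst => // r /f_near/andP[].
by move: lo hi; rewrite mulrBl mulrDl [f 0 * s]mulrC ler_distl => -> ->.
Qed.

Lemma primitive0_le_antiderivative (Phi : R -> R) (s : R) : 0 <= s ->
  {within `[0, s], continuous Phi} ->
  (forall x, 0 < x < s -> derivable Phi x 1 /\ f x <= derive1 Phi x) ->
  primitive0 f s <= Phi s - Phi 0.
Proof.
move=> s0 cPhi dPhi.
suff : Phi 0 - primitive0 f 0 <= Phi s - primitive0 f s by rewrite primitive0_0; lra.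
have dF (x : R) : x \in `]0, s[ -> derivable (Phi - primitive0 f) x 1 /\
    0 <= derive1 (Phi - primitive0 f) x.
  rewrite in_itv /= => /andP[x0 xs]; have [dPx fPx] := dPhi x (andb_true_intro (conj x0 xs)).
  have [dFx F'x] := primitive0_derive x0.
  split; first exact: derivableB.
  by rewrite derive1E deriveB // -!derive1E F'x subr_ge0.
apply: (@ger0_derive1_ndecr _ (Phi - primitive0 f) 0 s) => //.
- by move=> x /dF[].
- by move=> x /dF[].
- move=> x; exact: (@continuousB R _ (subspace `[0, s]) Phi (primitive0 f) x
    (cPhi x) (primitive0_within_itvcc s0 x)).
Qed.

End ContinuousIntegrand.
End Primitive.

Lemma derive_comp_scalar (R : realType) (V : normedModType R) (f : R -> R) (g : V -> R)
    (x v : V) :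
  differentiable g x -> derivable f (g x) 1 ->
  'D_v (f \o g) x = 'D_v g x * derive1 f (g x).
Proof.
move=> dg /derivable1_diffP df.
rewrite deriveE; last exact: differentiable_comp.
by rewrite diff_comp // /= diff1E // deriveE.
Qed.

Section EuclideanPlane.
Context {R : realType}.
Notation V := 'rV[R]_2.

Definition dot (x y : V) : R := \sum_(i < 2) x ord0 i * y ord0 i.

Lemma dotE (x y : V) : dot x y =
  x ord0 ord0 * y ord0 ord0 + x ord0 (lift ord0 ord0) * y ord0 (lift ord0 ord0).
Proof. by rewrite /dot !big_ord_recl big_ord0 addr0. Qed.

Lemma dotC (x y : V) : dot x y = dot y x.
Proof. by rewrite !dotE mulrC [x _ _ * _]mulrC. Qed.

Lemma dot0l (v : V) : dot 0 v = 0.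
Proof. by rewrite dotE !mxE !mul0r addr0. Qed.

Lemma dot_ge0 (x : V) : 0 <= dot x x.
Proof. by apply: sumr_ge0 => i _; rewrite -expr2 sqr_ge0. Qed.

Lemma enormE (x : V) : enorm x = Num.sqrt (dot x x).
Proof. by rewrite /enorm /dot; congr Num.sqrt; apply: eq_bigr => i _; rewrite expr2. Qed.

Lemma enorm_ge0 (x : V) : 0 <= enorm x.
Proof. by rewrite enormE sqrtr_ge0. Qed.

Lemma enorm_sqr (x : V) : enorm x ^+ 2 = dot x x.
Proof. by rewrite enormE sqr_sqrtr // dot_ge0. Qed.

Lemma enorm0 : enorm (0 : V) = 0.
Proof. by rewrite enormE dot0l sqrtr0. Qed.

Lemma enorm_gt0 {x : V} : x != 0 -> 0 < enorm x.
Proof.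
move=> x0; rewrite enormE sqrtr_gt0 lt_def dot_ge0 andbT.
apply: contra x0 => /eqP/psumr_eq0P x2_0; apply/eqP/rowP => i; rewrite mxE; apply/eqP.
by rewrite -sqrf_eq0 expr2 x2_0 // => j _; rewrite -expr2 sqr_ge0.
Qed.

Lemma dot_sqr_le (x y : V) : dot x y ^+ 2 <= dot x x * dot y y.
Proof.
rewrite !dotE; set a := x _ _; set b := x _ _; set c := y _ _; set d := y _ _.
by have := sqr_ge0 (a * d - b * c); nra.
Qed.

Lemma normr_dot_le (x y : V) : `|dot x y| <= enorm x * enorm y.
Proof.
rewrite -(ler_pXn2r (n := 2)) // ?nnegrE ?mulr_ge0 ?enorm_ge0 //.
by rewrite real_normK ?num_real // exprMn !enorm_sqr dot_sqr_le.
Qed.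

(* [`|h|] is the sup norm of the matrix normed space, which defines the topology. *)
Lemma enorm_le_normr (h : V) : enorm h <= 2 * `|h|.
Proof.
have coord_le (i : 'I_2) : `|h ord0 i| <= `|h|.
  by rewrite [leRHS]/Num.Def.normr /= mx_normrE; exact: (le_bigmax _ _ (ord0, i)).
rewrite enormE -[leRHS]ger0_norm ?mulr_ge0 // -sqrtr_sqr; apply: ler_wsqrtr.
apply: (@le_trans _ _ (\sum_(i < 2) `|h| ^+ 2)).
  apply: ler_sum => i _; rewrite -expr2 -real_normK ?num_real //.
  by rewrite lerXn2r // ?nnegrE // coord_le.
by rewrite sumr_const card_ord exprMn -mulr_natr; have := normr_ge0 h; nra.
Qed.

Lemma near0_enorm_le {d : R} : 0 < d -> \forall h \near (0 : V), enorm h <= d.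
Proof.
move=> d0; apply/nbhs_ballP; exists (d / 2); first exact: divr_gt0.
move=> h; rewrite -ball_normE /= sub0r normrN => hd.
by apply: le_trans (enorm_le_normr h) _; rewrite -ler_pdivlMl // mulrC ltW.
Qed.

Lemma dotl_linear (v : V) : linear (fun x : V => dot x v).
Proof.
move=> a x y; rewrite /dot scaler_sumr -big_split /=; apply: eq_bigr => i _.
by rewrite !mxE mulrDl /GRing.scale /= mulrA.
Qed.

Definition dotl (v : V) : {linear V -> R} :=
  HB.pack (fun x : V => dot x v) (GRing.isLinear.Build _ _ _ _ _ (dotl_linear v)).

Lemma dotl_continuous (v : V) : continuous (dotl v).
Proof.
have -> : dotl v = (fun y : V => y ord0 ord0) \* cst (v ord0 ord0) +
    (fun y : V => y ord0 (lift ord0 ord0)) \* cst (v ord0 (lift ord0 ord0)) :> (V -> R).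
  by apply/funext => y; rewrite /= dotE.
by move=> y; apply: continuousD; apply: continuousM;
  solve [exact: cst_continuous | exact: coord_continuous].
Qed.

Definition has_gradient (f : V -> R) (x g : V) : Prop :=
  forall e : R, 0 < e ->
    \forall h \near (0 : V), `|f (h + x) - f x - dot h g| <= e * enorm h.

Lemma has_gradient_derive {f : V -> R} {x g : V} : has_gradient f x g ->
  differentiable f x /\ forall u, 'D_u f x = dot u g.
Proof.
move=> fg; have Lc := dotl_continuous g.
have dfL : f \o shift x = cst (f x) + dotl g +o_ (0 : V) (@id V).
  apply/eqaddoP => e e0; have := fg (e / 2) (divr_gt0 e0 (ltr0n _ 2)).
  apply: filterS => h hle; rewrite /= opprD addrA; apply: le_trans hle _.
  by have := enorm_le_normr h; have := ltW e0; nra.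
have dL := diff_unique Lc dfL.
have df : differentiable f x by apply/diff_locallyP; rewrite dL; split.
by split => // u; rewrite deriveE // dL.
Qed.

Lemma has_gradient_dotl (v x : V) : has_gradient (fun y => dot y v) x v.
Proof.
move=> e e0; apply: filterE => h.
have -> : dot (h + x) v - dot x v - dot h v = 0 by rewrite !dotE !mxE; ring.
by rewrite normr0 mulr_ge0 ?enorm_ge0 // ltW.
Qed.

Lemma has_gradient_dot_self (x : V) : has_gradient (fun y => dot y y) x (2 *: x).
Proof.
move=> e e0; have := near0_enorm_le e0; apply: filterS => h he.
have -> : dot (h + x) (h + x) - dot x x - dot h (2 *: x) = dot h h.
  by rewrite !dotE !mxE; ring.
by rewrite -enorm_sqr ger0_norm ?sqr_ge0 // expr2 ler_wpM2r // ?enorm_ge0.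
Qed.

Lemma derive_enorm {x : V} : x != 0 ->
  differentiable (@enorm R) x /\ forall v, 'D_v (@enorm R) x = dot x v / enorm x.
Proof.
move=> x0; have [dq Dq] := has_gradient_derive (has_gradient_dot_self x).
have enorm_sqrt : @enorm R = Num.sqrt \o (fun y : V => dot y y).
  by apply/funext => y; rewrite /= enormE.
have q0 : 0 < dot x x by rewrite -enorm_sqr exprn_gt0 // enorm_gt0.
have [ds Ds] := is_derive1_sqrt q0.
split; first by rewrite enorm_sqrt; apply: differentiable_comp => //; exact/derivable1_diffP.
move=> v; rewrite [in LHS]enorm_sqrt derive_comp_scalar // Dq derive1E Ds -enormE.
by rewrite !dotE !mxE; field; rewrite gt_eqF // enorm_gt0.
Qed.

End EuclideanPlane.

Section RadialEnergy.
Context {R : realType} (p mu : R) (eta : R -> R).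
Hypotheses (hp : 1 < p) (hmu : 1 < mu)
  (eta_cont : {within `[0, +oo[, continuous eta})
  (eta_range : forall t : R, 0 <= t -> 0 <= eta t <= 1).
Notation om := (omega p mu eta).
Notation h := (primitive0 om).
Notation G := (Gfun p mu eta).
Notation V := 'rV[R]_2.

Lemma omega_bounds (t : R) : 0 <= t ->
  (1 + t) `^ (- mu) <= om t <= (1 + t) `^ (p - 2).
Proof.
move=> t0; have : (1 + t) `^ (- mu) <= (1 + t) `^ (p - 2).
  by apply: ler_powR; [rewrite lerDl | move: hp hmu; lra].
move: (eta_range _ t0); rewrite /omega.
set e := eta t; set a := (1 + t) `^ (- mu); set b := (1 + t) `^ (p - 2).
by move=> /andP[e0 e1] ab; apply/andP; split; nra.
Qed.

Lemma omega0 : om 0 = 1.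
Proof. by rewrite /omega addr0 !powR1 !mulr1 subrKC. Qed.

Lemma omega_continuous : {within `[0, +oo[, continuous om}.
Proof.
have cw (a : R) : {within `[0, +oo[, continuous (fun t : R => (1 + t) `^ a)}.
  apply: continuous_in_subspaceT => t; rewrite inE /= in_itv /= andbT => t0.
  by apply: powR1D_continuous; apply: lt_le_trans t0; rewrite ltrN10.
have -> : om = eta \* (fun t => (1 + t) `^ (- mu)) +
    (cst 1 - eta) \* (fun t => (1 + t) `^ (p - 2)).
  by apply/funext => t; rewrite /omega.
move=> x; apply: continuousD; apply: continuousM; try exact: cw; first exact: eta_cont.
by apply: continuousB; [exact: cst_continuous | exact: eta_cont].
Qed.

Lemma primitive_omega_ge (s : R) : 0 <= s -> s * (1 + s) `^ (- mu) <= h s.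
Proof.
move=> s0; rewrite mulrC; apply: primitive0_ge_cst omega_continuous _ _ s0 _.
move=> r /andP[r0 rs]; have /andP[+ _] := omega_bounds _ r0; apply: le_trans.
by apply: le0_ger_powR; [move: hmu; lra | rewrite ltr_pwDl | rewrite lerD2l].
Qed.

Lemma primitive_omega_le_powR (s : R) : 0 <= s ->
  h s <= (p - 1)^-1 * ((1 + s) `^ (p - 1) - 1).
Proof.
move=> s0; set k := (p - 1)^-1; pose Phi := k \*: (fun y : R => (1 + y) `^ (p - 1)).
have -> : k * ((1 + s) `^ (p - 1) - 1) = Phi s - Phi 0.
  by rewrite /Phi /= addr0 powR1 /GRing.scale /=; ring.
apply: primitive0_le_antiderivative omega_continuous _ _ s0 _ _.
  apply: continuous_in_subspaceT => y; rewrite inE /= in_itv /= => /andP[y0 _].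
  by apply/continuousZl_tmp/powR1D_continuous; apply: lt_le_trans y0; rewrite ltrN10.
move=> x /andP[x0 _]; have [dw w'] := is_derive_powR1D (p - 1) x (lt_trans (ltrN10 R) x0).
split; first exact: derivableZ.
rewrite derive1E deriveZ // w' /GRing.scale /= mulrA mulVf ?subr_eq0 ?gt_eqF // mul1r.
rewrite (_ : p - 1 - 1 = p - 2); last by ring.
by have /andP[] := omega_bounds _ (ltW x0).
Qed.

Lemma primitive_omega_le (s : R) : 0 <= s ->
  h s <= (1 + (p - 1)^-1) * (s * (1 + s) `^ (p - 2)).
Proof.
move=> s0; have k0 : 0 < (p - 1)^-1 by rewrite invr_gt0 subr_gt0.
have sw0 : 0 <= s * (1 + s) `^ (p - 2) by rewrite mulr_ge0 ?powR_ge0.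
rewrite mulrDl mul1r; have [p2|p2] := leP 2 p.
  rewrite -[h s]addr0; apply: lerD; last by rewrite mulr_ge0 // ltW.
  rewrite mulrC; apply: primitive0_le_cst omega_continuous _ _ s0 _.
  move=> r /andP[r0 rs]; have /andP[_ /le_trans] := omega_bounds _ r0; apply.
  by apply: ge0_ler_powR; rewrite ?nnegrE ?subr_ge0 ?addr_ge0 ?lerD2l // (le_trans r0 rs).
rewrite -[h s]add0r; apply: lerD; first exact: sw0.
apply: le_trans (primitive_omega_le_powR s s0) _; apply: ler_wpM2l; first exact: ltW.
rewrite (_ : p - 2 = p - 1 - 1); last by ring.
by apply: powR1D_sub1_le => //; move: p2; lra.
Qed.

Lemma primitive_omega_continuous : {within `[0, +oo[, continuous h}.
Proof. exact: primitive0_continuous omega_continuous. Qed.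

Lemma Gfun_primitive : G = primitive0 h \o @enorm R.
Proof. by []. Qed.

Lemma Gfun_has_gradient0 : has_gradient G 0 0.
Proof.
move=> e e0; have [d d0 gd] := primitive0_near0 primitive_omega_continuous e0.
have := near0_enorm_le d0; apply: filterS => x xd.
rewrite addr0 dotC dot0l subr0 Gfun_primitive /= enorm0 primitive0_0 subr0.
by have := gd _ (andb_true_intro (conj (enorm_ge0 x) xd)); rewrite primitive0_0 mulr0 subr0.
Qed.

Lemma derive_Gfun_neq0 {x : V} : x != 0 ->
  differentiable G x /\ forall v, 'D_v G x = h (enorm x) / enorm x * dot x v.
Proof.
move=> x0; have [dn Dn] := derive_enorm x0; have t0 := enorm_gt0 x0.
have [dg g'] := primitive0_derive primitive_omega_continuous t0.
rewrite Gfun_primitive; split; first by apply: differentiable_comp => //; exact/derivable1_diffP.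
by move=> v; rewrite derive_comp_scalar // Dn g'; ring.
Qed.

(* At [y = 0] the formula gives [0] (as [0^-1 = 0]), which is the right value. *)
Lemma derive_Gfun (v : V) : 'D_v G = fun y => h (enorm y) / enorm y * dot y v.
Proof.
apply/funext => y; have [->|y0] := eqVneq y 0; last by have [_ ->] := derive_Gfun_neq0 y0.
by have [_ ->] := has_gradient_derive Gfun_has_gradient0; rewrite dotC !dot0l mulr0.
Qed.

Lemma differentiable_Gfun (x : V) : differentiable G x.
Proof.
have [->|x0] := eqVneq x 0; first exact: (has_gradient_derive Gfun_has_gradient0).1.
exact: (derive_Gfun_neq0 x0).1.
Qed.

Lemma derive2_Gfun_neq0 (v : V) {x : V} : x != 0 ->
  differentiable ('D_v G) x /\ forall u, 'D_u ('D_v G) x =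
    om (enorm x) * (dot x u * dot x v / enorm x ^+ 2) +
    h (enorm x) / enorm x * (dot u v - dot x u * dot x v / enorm x ^+ 2).
Proof.
move=> x0; have [dn Dn] := derive_enorm x0; have t0 := enorm_gt0 x0.
have [dh h'] := primitive0_derive omega_continuous t0.
have [dd Dd] := has_gradient_derive (has_gradient_dotl v x).
have dhn : differentiable (h \o @enorm R) x.
  by apply: differentiable_comp => //; exact/derivable1_diffP.
have dni : differentiable (fun y : V => (enorm y)^-1) x.
  by apply: differentiableV => //; rewrite gt_eqF.
have -> : 'D_v G = (h \o @enorm R) * (fun y => (enorm y)^-1) * (fun y => dot y v).
  by rewrite derive_Gfun; apply/funext.
split; first by apply: differentiableM => //; apply: differentiableM.
move=> u; rewrite deriveM; last exact: diff_derivable.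
  rewrite deriveM; [ | exact: diff_derivable | exact: diff_derivable].
  rewrite deriveV; [ | by rewrite gt_eqF | exact: diff_derivable].
  rewrite (@derive_comp_scalar _ _ h (@enorm R)) // Dn h' Dd /GRing.scale /=.
  have -> : ((h \o @enorm R) * (fun y : V => (enorm y)^-1)) x = h (enorm x) / enorm x by [].
  by field; rewrite gt_eqF.
by apply: diff_derivable; apply: differentiableM.
Qed.

Lemma derive_Gfun_has_gradient0 (v : V) : has_gradient ('D_v G) 0 v.
Proof.
rewrite derive_Gfun => e e0.
set e' := e / (enorm v + 1).
have v1 : 0 < enorm v + 1 by rewrite ltr_wpDl ?enorm_ge0.
have e'0 : 0 < e' by rewrite divr_gt0.
have [d d0 hd] := primitive0_near0 omega_continuous e'0.
have := near0_enorm_le d0; apply: filterS => x xd.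
rewrite addr0 enorm0 invr0 mulr0 mul0r subr0; rewrite omega0 in hd.
have [->|x0] := eqVneq x 0; first by rewrite enorm0 dot0l !mulr0 subr0 normr0.
have t0 := enorm_gt0 x0.
have -> : h (enorm x) / enorm x * dot x v - dot x v =
    (h (enorm x) - enorm x * 1) * dot x v / enorm x by field; rewrite gt_eqF.
rewrite normrM normfV (gtr0_norm t0) ler_pdivrMr // normrM.
apply: le_trans (ler_pM (normr_ge0 _) (normr_ge0 _) (hd _ _) (normr_dot_le x v)) _.
  by rewrite (ltW t0) xd.
have -> : e' * enorm x * (enorm x * enorm v) = e' * enorm v * (enorm x * enorm x) by ring.
rewrite -[leRHS]mulrA ler_wpM2r ?mulr_ge0 ?(ltW t0) //.
by rewrite /e' mulrAC ler_pdivrMr // ler_wpM2l ?(ltW e0) // lerDl.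
Qed.

Lemma differentiable_derive_Gfun (v x : V) : differentiable ('D_v G) x.
Proof.
have [->|x0] := eqVneq x 0; first exact: (has_gradient_derive (derive_Gfun_has_gradient0 v)).1.
exact: (derive2_Gfun_neq0 v x0).1.
Qed.

Lemma derive2_Gfun_bounds (x z : V) :
  (1 + enorm x) `^ (- mu) * enorm z ^+ 2 <= 'D_z ('D_z G) x <=
  (1 + (p - 1)^-1) * (1 + enorm x) `^ (p - 2) * enorm z ^+ 2.
Proof.
have C1 : 1 <= 1 + (p - 1)^-1 by rewrite lerDl invr_ge0 subr_ge0 ltW.
rewrite enorm_sqr; have [->|x0] := eqVneq x 0.
  have [_ ->] := has_gradient_derive (derive_Gfun_has_gradient0 z).
  by rewrite enorm0 addr0 !powR1 mul1r mulr1 lexx /= ler_peMl ?dot_ge0.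
have [_ ->] := derive2_Gfun_neq0 z x0.
set t := enorm x; have t0 : 0 < t := enorm_gt0 x0.
have w2_le : (1 + t) `^ (p - 2) <= (1 + (p - 1)^-1) * (1 + t) `^ (p - 2).
  by rewrite ler_peMl ?powR_ge0.
apply: weighted_mean_bounds.
- have /andP[-> /le_trans->] // := omega_bounds _ (ltW t0).
- apply/andP; split.
    by rewrite ler_pdivlMr // mulrC; exact: primitive_omega_ge (ltW t0).
  rewrite ler_pdivrMr // -mulrA [_ `^ _ * t]mulrC; exact: primitive_omega_le (ltW t0).
- have t2 : 0 < t ^+ 2 by rewrite exprn_gt0.
  rewrite divr_ge0 -?expr2 ?sqr_ge0 ?(ltW t2) //= ler_pdivrMr // /t enorm_sqr mulrC.
  exact: dot_sqr_le.
Qed.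

End RadialEnergy.

Theorem proposition5p4 (R : realType) (p mu : R) (eta : R -> R)
  (hp : 1 < p) (hmu : 1 < mu)
  (heta_cont : {within `[0, +oo[, continuous eta})
  (heta_range : forall t : R, 0 <= t -> 0 <= eta t <= 1) :
  exists c5 c6 : R, 0 < c5 /\ 0 < c6 /\
    (forall xi : 'rV[R]_2,
       differentiable (Gfun p mu eta) xi /\
       forall v : 'rV[R]_2, differentiable ('D_v (Gfun p mu eta)) xi) /\
    (forall xi zeta : 'rV[R]_2,
       c5 * (1 + enorm xi) `^ (- mu) * enorm zeta ^+ 2
         <= 'D_zeta ('D_zeta (Gfun p mu eta)) xi /\
       'D_zeta ('D_zeta (Gfun p mu eta)) xi
         <= c6 * (1 + enorm xi) `^ (p - 2) * enorm zeta ^+ 2).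
Proof.
exists 1, (1 + (p - 1)^-1); split; first exact: ltr01.
split; first by rewrite addr_gt0 // invr_gt0 subr_gt0.
split=> [xi | xi zeta].
  by split=> [|v]; [apply: differentiable_Gfun | apply: differentiable_derive_Gfun].
by rewrite mul1r; apply/andP; apply: derive2_Gfun_bounds.
Qed.
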